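(* Let $p$ be a prime. For the tripartite system $\mathbb{C}^p\otimes\mathbb{C}^p\otimes\mathbb{C}^p$ there exists a complete set of $p^3+1$ mutually unbiased bases consisting of $p+1$ bases all of whose elements are fully separable (product states) and $p^3-p$ bases all of whose elements are entangled with respect to every bipartition (genuinely tripartite entangled).
   Context: Two orthonormal bases of $\mathbb{C}^d$ are mutually unbiased if every element of one has squared overlap $1/d$ with every element of the other; a complete set consists of $d+1$ pairwise mutually unbiased bases. A pure state is fully separable if it is a tensor product of three single-qupit states, and genuinely tripartite entangled if it is not a product state across any of the bipartitions $(1|23)$, $(2|13)$, $(3|12)$. *)

From HB Require Import structures.
From mathcomp Require Import all_boot all_order all_algebra.
From mathcomp Require Import complex.
From mathcomp Require Import Rstruct.
Set Implicit Arguments. Unset Strict Implicit. Unset Printing Implicit Defensive.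
Import Order.TTheory GRing.Theory Num.Theory.
Local Open Scope ring_scope.

From Stdlib Require Rdefinitions.
Definition Cplx : numClosedFieldType := (Rdefinitions.R)[i].

Definition idx3 (p : nat) : finType := ('I_p * 'I_p * 'I_p)%type.

Definition vec3 (p : nat) := idx3 p -> Cplx.

Definition hdot (p : nat) (u v : vec3 p) : Cplx :=
  \sum_(x : idx3 p) (u x)^* * v x.

(* A family of vectors indexed by a set of size p^3 = dim (C^p)^{(x)3};
   it is an orthonormal basis iff it is orthonormal. *)
Definition family3 (p : nat) := idx3 p -> vec3 p.

Definition orthonormal_basis (p : nat) (B : family3 p) : Prop :=
  forall a b : idx3 p, hdot (B a) (B b) = (a == b)%:R.

Definition mutually_unbiased (p : nat) (B B' : family3 p) : Prop :=
  forall a b : idx3 p, `|hdot (B a) (B' b)| ^+ 2 = ((p ^ 3)%N)%:R^-1.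

Definition fully_separable (p : nat) (psi : vec3 p) : Prop :=
  exists u v w : 'I_p -> Cplx,
    forall i j k, psi (i, j, k) = u i * v j * w k.

Definition product_1_23 (p : nat) (psi : vec3 p) : Prop :=
  exists (u : 'I_p -> Cplx) (phi : 'I_p -> 'I_p -> Cplx),
    forall i j k, psi (i, j, k) = u i * phi j k.

Definition product_2_13 (p : nat) (psi : vec3 p) : Prop :=
  exists (v : 'I_p -> Cplx) (phi : 'I_p -> 'I_p -> Cplx),
    forall i j k, psi (i, j, k) = v j * phi i k.

Definition product_3_12 (p : nat) (psi : vec3 p) : Prop :=
  exists (w : 'I_p -> Cplx) (phi : 'I_p -> 'I_p -> Cplx),
    forall i j k, psi (i, j, k) = w k * phi i j.

Definition genuinely_tripartite_entangled (p : nat) (psi : vec3 p) : Prop :=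
  ~ product_1_23 psi /\ ~ product_2_13 psi /\ ~ product_3_12 psi.

(* For odd p, identify (C^p)^(x)3 with functions on F = GF(p^3), using coordinates
   in an F_p-basis e_1, e_2, e_3 of F that is orthogonal for (x, y) |-> T(x y), where
   T : F -> F_p is F_p-linear with T 1 <> 0.  With the additive character
   psi = chi o T, the Wootters-Fields vectors y |-> psi(a y^2 + b y) / sqrt |F| form an
   orthonormal basis for each a in F, and bases for different a are unbiased because
   the Gauss sum of a nonzero quadratic has modulus sqrt |F|; the standard basis
   completes the set.  For a in F_p the form a y^2 is diagonal in the orthogonal
   coordinates, so the vectors are product states.  Otherwise a product structure
   across the cut (i | rest) forces psi(2 a e_i e_j) = 1, i.e. T(a e_i e_j) = 0, for
   all j <> i; then (a - lambda) e_i is T-orthogonal to all of F for some lambda in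
   F_p, and nondegeneracy of T gives a = lambda.  For p = 2 the bases come from
   Z/4-valued quadratic forms (Galois-ring bases) and are checked by computation. *)

From HB Require Import structures.
From mathcomp Require Import all_boot all_order all_algebra all_field cyclic.
From mathcomp Require Import complex Rstruct ring.
Set Implicit Arguments. Unset Strict Implicit. Unset Printing Implicit Defensive.
Import Order.TTheory GRing.Theory Num.Theory.
Local Open Scope ring_scope.

Definition isqrt (n : nat) : Cplx := (sqrtC n%:R)^-1.

Lemma isqrt_ge0 n : 0 <= isqrt n.
Proof. by rewrite invr_ge0 sqrtC_ge0 ler0n. Qed.

Lemma conj_isqrt n : (isqrt n)^* = isqrt n.
Proof. exact/conj_Creal/ger0_real/isqrt_ge0. Qed.

Lemma norm_isqrt n : `|isqrt n| = isqrt n.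
Proof. exact/ger0_norm/isqrt_ge0. Qed.

Lemma isqrtM n : isqrt n * isqrt n = n%:R^-1.
Proof. by rewrite -expr2 exprVn sqrtCK. Qed.

Lemma sqr_norm_isqrt n : `|isqrt n| ^+ 2 = n%:R^-1.
Proof. by rewrite norm_isqrt expr2 isqrtM. Qed.

Section AdditiveCharacter.

Variable F : finFieldType.

Lemma card_F_neq0 : #|F|%:R != 0 :> Cplx.
Proof. by rewrite pnatr_eq0 -lt0n; apply/card_gt0P; exists 0. Qed.

Lemma isqrt_card_neq0 : isqrt #|F| != 0.
Proof. by rewrite invr_eq0 sqrtC_eq0 card_F_neq0. Qed.

Variable psi : F -> Cplx.
Hypothesis psiD : {morph psi : x y / x + y >-> x * y}.
Hypothesis psi_norm : forall x, `|psi x| = 1.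

Lemma conj_psiM x : (psi x)^* * psi x = 1.
Proof. by rewrite mulrC -normCK psi_norm expr1n. Qed.

Lemma psi_neq0 x : psi x != 0.
Proof. by rewrite -normr_eq0 psi_norm oner_eq0. Qed.

Lemma psi0 : psi 0 = 1.
Proof. by apply: (mulfI (psi_neq0 0)); rewrite -psiD addr0 mulr1. Qed.

Lemma psiN x : psi (- x) = (psi x)^*.
Proof. by apply: (mulIf (psi_neq0 x)); rewrite -psiD addNr psi0 conj_psiM. Qed.

Lemma conj_psiMB x y : (psi x)^* * psi y = psi (y - x).
Proof. by rewrite -psiN psiD mulrC. Qed.

Hypothesis psi_nontrivial : exists t, psi t != 1.

Lemma sum_psi : \sum_(y : F) psi y = 0.
Proof.
have [t psi_t] := psi_nontrivial.
have: \sum_y psi y = psi t * \sum_y psi y.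
  by rewrite mulr_sumr (reindex_inj (addIr t)); apply: eq_bigr => y _; rewrite psiD mulrC.
move/eqP; rewrite -subr_eq0 -{1}[\sum_y _]mul1r -mulrBl mulf_eq0 subr_eq0.
by rewrite eq_sym (negPf psi_t) => /eqP.
Qed.

Lemma sum_psiM g : \sum_(y : F) psi (g * y) = if g == 0 then #|F|%:R else 0.
Proof.
have [->|g0] := eqVneq g 0.
  by rewrite (eq_bigr (fun _ => 1)) ?sumr_const ?cardT // => y _; rewrite mul0r psi0.
by rewrite -[RHS]sum_psi [RHS](reindex_inj (mulfI g0)).
Qed.

Hypothesis two_neq0 : 2%:R != 0 :> F.

Lemma gauss_sum_sqr_norm D C : D != 0 ->
  `|\sum_(y : F) psi (D * y ^+ 2 + C * y)| ^+ 2 = #|F|%:R.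
Proof.
move=> D0; pose Q y := D * y ^+ 2 + C * y.
have QD y z : Q (y + z) - Q z = Q y + 2%:R * D * z * y by rewrite /Q; ring.
rewrite normCKC rmorph_sum mulr_suml /=.
transitivity (\sum_(y : F) psi (Q y) * \sum_(z : F) psi (2%:R * D * y * z)).
  under [RHS]eq_bigr do rewrite mulr_sumr.
  rewrite [RHS]exchange_big /=; apply: eq_bigr => z _.
  rewrite mulr_sumr (reindex_inj (addIr z)); apply: eq_bigr => y _.
  by rewrite conj_psiMB QD psiD mulrAC.
have inner y : \sum_(z : F) psi (2%:R * D * y * z) = if y == 0 then #|F|%:R else 0.
  by rewrite sum_psiM !mulf_eq0 (negPf two_neq0) (negPf D0).
have Q0 : Q 0 = 0 by rewrite /Q expr2 !mulr0 addr0.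
under eq_bigr => y _ do rewrite inner (fun_if ( *%R (psi (Q y)))) mulr0.
by rewrite -big_mkcond big_pred1_eq Q0 psi0 mul1r.
Qed.

Definition dotF (u v : F -> Cplx) : Cplx := \sum_y (u y)^* * v y.

Definition quad_vec (a b : F) : F -> Cplx :=
  fun y => isqrt #|F| * psi (a * y ^+ 2 + b * y).

Lemma dotF_quad_vec a b a' b' : dotF (quad_vec a b) (quad_vec a' b') =
  isqrt #|F| * isqrt #|F| * \sum_y psi ((a' - a) * y ^+ 2 + (b' - b) * y).
Proof.
rewrite /dotF mulr_sumr; apply: eq_bigr => y _.
rewrite rmorphM /= conj_isqrt mulrACA conj_psiMB; congr (_ * psi _); ring.
Qed.

Lemma quad_vec_orthonormal a b b' :
  dotF (quad_vec a b) (quad_vec a b') = (b == b')%:R.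
Proof.
rewrite dotF_quad_vec subrr.
under eq_bigr do rewrite mul0r add0r.
rewrite sum_psiM subr_eq0 eq_sym; case: eqP => _; last by rewrite mulr0.
by rewrite isqrtM mulVf ?card_F_neq0.
Qed.

Lemma quad_vec_unbiased a b a' b' : a != a' ->
  `|dotF (quad_vec a b) (quad_vec a' b')| ^+ 2 = #|F|%:R^-1.
Proof.
move=> aa'; rewrite dotF_quad_vec normrM exprMn gauss_sum_sqr_norm.
  by rewrite normrM exprMn !sqr_norm_isqrt -mulrA mulVf ?mulr1 ?card_F_neq0.
by rewrite subr_eq0 eq_sym.
Qed.

Lemma quad_vec_flat a b y : `|quad_vec a b y| ^+ 2 = #|F|%:R^-1.
Proof. by rewrite normrM exprMn psi_norm expr1n mulr1 sqr_norm_isqrt. Qed.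

End AdditiveCharacter.

Section OrthogonalCoordinates.

Variables (K F : finFieldType) (iota : {rmorphism K -> F}) (T : {additive F -> K}).
Hypothesis T_iotaM : forall k x, T (iota k * x) = k * T x.
Hypothesis T1_neq0 : T 1 != 0.

Lemma T_nondegenerate g : (forall x, T (g * x) = 0) -> g = 0.
Proof.
move=> Tg; apply/eqP; apply: contraNT T1_neq0 => g0.
by rewrite -(mulfV g0) Tg.
Qed.

Variables (n : nat) (e : 'I_n -> F).

Definition ecomb (y : 'I_n -> K) : F := \sum_i iota (y i) * e i.

Hypothesis e_span : forall x, exists y, x = ecomb y.
Hypothesis e_neq0 : forall i, e i != 0.
Hypothesis e_orth : forall i j, i != j -> T (e i * e j) = 0.

Lemma T_mul_ecomb g y : T (g * ecomb y) = \sum_j y j * T (g * e j).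
Proof.
rewrite mulr_sumr raddf_sum; apply: eq_bigr => j _.
by rewrite mulrCA T_iotaM.
Qed.

Lemma T_e_mul_ecomb i y : T (e i * ecomb y) = y i * T (e i * e i).
Proof.
rewrite T_mul_ecomb (bigD1 i) // big1 /= ?addr0 // => j ji.
by rewrite e_orth ?mulr0 // eq_sym.
Qed.

Lemma T_sqr_e_neq0 i : T (e i * e i) != 0.
Proof.
apply: contra (e_neq0 i) => /eqP Tii; apply/eqP/T_nondegenerate => x.
by have [y ->] := e_span x; rewrite T_e_mul_ecomb Tii mulr0.
Qed.

Lemma scalar_of_orth a i :
  (forall j, j != i -> T (a * e i * e j) = 0) -> exists k, a = iota k.
Proof.
move=> a_orth; pose k := T (a * e i * e i) / T (e i * e i); exists k.
have Tg j : T ((a - iota k) * e i * e j) = 0.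
  rewrite !mulrBl raddfB -[iota k * _ * _]mulrA T_iotaM.
  have [->|ji] := eqVneq j i; first by rewrite divfK ?T_sqr_e_neq0 // subrr.
  by rewrite a_orth // e_orth 1?eq_sym // mulr0 subr0.
have: (a - iota k) * e i = 0.
  apply: T_nondegenerate => x; have [y ->] := e_span x.
  by rewrite T_mul_ecomb big1 // => j _; rewrite Tg mulr0.
by move/eqP; rewrite mulf_eq0 (negPf (e_neq0 i)) orbF subr_eq0 => /eqP.
Qed.

Variable chi : K -> Cplx.
Hypothesis chiD : {morph chi : x y / x + y >-> x * y}.
Hypothesis chi_norm : forall k, `|chi k| = 1.
Hypothesis chi_eq1 : forall k, chi k = 1 -> k = 0.

Definition trace_char (x : F) : Cplx := chi (T x).

Lemma trace_charD : {morph trace_char : x y / x + y >-> x * y}.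
Proof. by move=> x y; rewrite /trace_char raddfD chiD. Qed.

Lemma trace_char_norm x : `|trace_char x| = 1.
Proof. exact: chi_norm. Qed.

Lemma trace_char_nontrivial : exists t, trace_char t != 1.
Proof. by exists 1; apply: contra T1_neq0 => /eqP/chi_eq1->. Qed.

Lemma trace_char_eqT x y : trace_char x = trace_char y -> T x = T y.
Proof.
move=> Exy; apply/eqP; rewrite -subr_eq0 -raddfB; apply/eqP/chi_eq1.
rewrite -/(trace_char _) -(conj_psiMB trace_charD trace_char_norm) Exy.
exact: (conj_psiM trace_char_norm y).
Qed.

Local Notation vec := (quad_vec trace_char).

Hypothesis two_neq0 : 2%:R != 0 :> K.

Lemma quad_vec_rank_orth a b x z :
  vec a b (x + z) * vec a b 0 = vec a b x * vec a b z -> T (a * x * z) = 0.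
Proof.
rewrite /quad_vec mulrACA [RHS]mulrACA -!trace_charD.
move/(mulfI (mulf_neq0 (isqrt_card_neq0 F) (isqrt_card_neq0 F))) => /trace_char_eqT.
set Q := fun y => a * y ^+ 2 + b * y.
rewrite (_ : Q (x + z) + Q 0 = (Q x + Q z) + (a * x * z) *+ 2); last by rewrite /Q; ring.
rewrite raddfD -[RHS]addr0 => /addrI/eqP; rewrite raddfMn -mulr_natr mulf_eq0.
by rewrite (negPf two_neq0) orbF => /eqP.
Qed.

Lemma quad_vec_separable k b y : vec (iota k) b (ecomb y) =
  isqrt #|F| * \prod_i chi (k * y i ^+ 2 * T (e i * e i) + y i * T (b * e i)).
Proof.
rewrite /quad_vec /trace_char; congr (_ * _).
rewrite -(big_morph chi chiD (psi0 chiD chi_norm)); congr chi.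
rewrite raddfD T_iotaM expr2 !T_mul_ecomb mulr_sumr -big_split.
by apply: eq_bigr => i _ /=; rewrite [ecomb y * _]mulrC T_e_mul_ecomb; ring.
Qed.

End OrthogonalCoordinates.

Lemma exists_rootfree_cubic (K : finFieldType) :
  exists q : {poly K}, (size q <= 3)%N /\ forall r, ~~ root ('X^3 + q) r.
Proof.
(* g (r, s, t) lists the coefficients of (X - r)(X^2 + s X + t); g is not injective,
   hence not onto, and a monic cubic outside its image has no root. *)
pose g (y : K * K * K) := (y.1.2 - y.1.1, y.2 - y.1.1 * y.1.2, - (y.1.1 * y.2)).
have [[[c2 c1] c0] c_notin] : exists c, c \notin codom g.
  apply/existsP; apply: contraT; rewrite negb_exists => /forallP g_onto.
  have /image_injP g_inj : #|codom g| == #|{: K * K * K}|.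
    by apply/eqP/eq_card => c; move/negbNE: (g_onto c) => ->.
  have g_coll : g (0, -1, 0) = g (1, 0, 0) by rewrite /g /=; congr (_, _, _); ring.
  by case: (g_inj _ _ isT isT g_coll) => /eqP; rewrite eq_sym oner_eq0.
exists (Poly [:: c0; c1; c2]); split; first exact: size_Poly.
move=> r; apply: contra c_notin; rewrite rootE hornerD horner_Poly hornerXn /=.
move=> /eqP root_r; apply/codomP; exists (r, c2 + r, c1 + r * (c2 + r)).
rewrite /g /=; congr (_, _, _); try ring.
by rewrite -[LHS]subr0 -root_r; ring.
Qed.

Lemma ord3_cases (j : 'I_3) : [\/ j = ord0, j = lift ord0 ord0 | j = ord_max].
Proof.
by case: j => [[|[|[|//]]] ?]; [constructor 1|constructor 2|constructor 3]; apply: val_inj.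
Qed.

Section CubicExtension.

Variables (K : finFieldType) (q : {poly K}).
Hypothesis size_q : (size q <= 3)%N.
Hypothesis q_rootfree : forall r, ~~ root ('X^3 + q) r.

Local Notation f := ('X^3 + q).

Lemma size_cubic : size f = 4%N.
Proof. by rewrite size_polyDl size_polyXn. Qed.

Lemma cubic_monic_irreducible : monic_irreducible_poly f.
Proof.
split; last by rewrite monicE lead_coefDl ?size_polyXn // lead_coefXn.
by apply: cubic_irreducible; rewrite ?size_cubic.
Qed.

Local Notation F := {poly %/ f with cubic_monic_irreducible}.

Lemma card_cubic_ext : #|F| = (#|K| ^ 3)%N.
Proof. by rewrite card_qfpoly size_cubic. Qed.

Definition qtrace (x : F) : K := (x : {poly K})`_0 + (x : {poly K})`_2.

Fact qtrace_is_zmod_morphism : zmod_morphism qtrace.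
Proof. by move=> x y; rewrite /qtrace !raddfB /= !coefB; ring. Qed.

HB.instance Definition _ :=
  GRing.isZmodMorphism.Build F K qtrace qtrace_is_zmod_morphism.

Lemma qtraceZ k x : qtrace (k *: x) = k * qtrace x.
Proof. by rewrite /qtrace !poly_of_qpolyZ !coefZ; ring. Qed.

Lemma qtrace_algM k x : qtrace (k%:A * x) = k * qtrace x.
Proof. by rewrite mulr_algl qtraceZ. Qed.

Definition ptrace (p : {poly K}) : K := qtrace (in_qpoly f p).

Lemma ptrace_small (p : {poly K}) : (size p <= 3)%N -> ptrace p = p`_0 + p`_2.
Proof.
move=> p3; rewrite /ptrace /qtrace in_qpoly_small //.
by rewrite (mk_monicE cubic_monic_irreducible) size_cubic.
Qed.

Lemma ptraceB (p r : {poly K}) : ptrace (p - r) = ptrace p - ptrace r.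
Proof. by rewrite /ptrace raddfB /= raddfB. Qed.

Lemma ptraceZ k (p : {poly K}) : ptrace (k *: p) = k * ptrace p.
Proof. by rewrite /ptrace in_qpolyZ qtraceZ. Qed.

Lemma ptrace1 : ptrace 1 = 1.
Proof. by rewrite ptrace_small ?size_poly1 // coefC coef1 /= mulr0n addr0. Qed.

Lemma qtrace1 : qtrace 1 = 1.
Proof. by rewrite -(in_qpoly1 f) -/(ptrace 1) ptrace1. Qed.

Lemma ptraceX : ptrace 'X = 0.
Proof. by rewrite ptrace_small ?size_polyX // !coefX /= !mulr0n addr0. Qed.

Lemma ptraceX2 : ptrace 'X^2 = 1.
Proof. by rewrite ptrace_small ?size_polyXn // !coefXn /= mulr0n add0r. Qed.

Local Notation t3 := (ptrace 'X^3).

(* With T 1 = T X^2 = 1 and T X = 0, the choice of the X-coefficient -T(X^3) makes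
   the form (x, y) |-> T(x y) diagonal on this basis. *)
Definition cubic_basis_poly (i : 'I_3) : {poly K} :=
  [:: 1; 'X; 'X^2 - t3 *: 'X - 1]`_i.

Definition cubic_basis (i : 'I_3) : F := in_qpoly f (cubic_basis_poly i).

Lemma cubic_basis_orth i j :
  i != j -> qtrace (cubic_basis i * cubic_basis j) = 0.
Proof.
rewrite /cubic_basis -in_qpolyM -/(ptrace _).
move=> ij; wlog lt_ij : i j ij / (i < j)%N => [hwlog|].
  have /orP[lt_ij|lt_ji] : (i < j)%N || (j < i)%N by rewrite -neq_ltn.
    exact: hwlog.
  by rewrite mulrC; apply: hwlog; rewrite // eq_sym.
case: i j ij lt_ij => [[|[|[|//]]] ?] [[|[|[|//]]] ?] //= _ _.
- by rewrite mul1r ptraceX.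
- by rewrite mul1r !ptraceB ptraceZ ptrace1 ptraceX ptraceX2 mulr0 subr0 subrr.
- rewrite !mulrBr mulr1 -scalerAr -expr2 -exprS !ptraceB ptraceZ ptraceX ptraceX2.
  by rewrite mulr1 subrr subr0.
Qed.

Definition cubic_comb (y : K * K * K) : F :=
  ecomb (in_alg F : {rmorphism K -> F}) cubic_basis (fun l => [:: y.1.1; y.1.2; y.2]`_l).

Local Notation coords y := (fun l : 'I_3 => [:: y.1.1; y.1.2; y.2]`_l).

Lemma cubic_combE y :
  cubic_comb y = in_qpoly f (\sum_l coords y l *: cubic_basis_poly l).
Proof.
rewrite /cubic_comb /ecomb linear_sum; apply: eq_bigr => l _.
by rewrite mulr_algl linearZ.
Qed.

Lemma cubic_comb_polyE y : \sum_l coords y l *: cubic_basis_poly l =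
  (y.1.1 - y.2)%:P + (y.1.2 - t3 * y.2) *: 'X + y.2 *: 'X^2.
Proof.
rewrite !big_ord_recl big_ord0 /cubic_basis_poly /= -!mul_polyC !polyCB polyCM.
ring.
Qed.

Lemma size_deg2_lt (a b c : K) :
  (size (a%:P + b *: 'X + c *: 'X^2)%R < size (mk_monic f))%N.
Proof.
rewrite (mk_monicE cubic_monic_irreducible) size_cubic ltnS.
have small (p : {poly K}) : (size p <= 3)%N -> p \is a poly_of_size 3 by [].
suff: a%:P + b *: 'X + c *: 'X^2 \is a poly_of_size 3 by [].
by rewrite !rpredD ?rpredZ ?small ?size_polyC ?size_polyX ?size_polyXn //; case: eqP.
Qed.

Lemma cubic_comb_inj : injective cubic_comb.
Proof.
move=> [[a b] c] [[a' b'] c']; rewrite !cubic_combE !cubic_comb_polyE /=.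
move=> /(congr1 (fun x : F => (x : {poly K}))); rewrite !in_qpoly_small ?size_deg2_lt //.
move=> E; have coefE i := congr1 (fun p : {poly K} => p`_i) E.
move: (coefE 0%N) (coefE 1%N) (coefE 2%N).
rewrite !coefD !coefZ !coefC !coefX !coefXn /= !mulr0 !mulr1 !addr0 !add0r.
by move=> + + c_eq; rewrite c_eq => /addIr-> /addIr->.
Qed.

Lemma cubic_comb_bij : bijective cubic_comb.
Proof.
apply: inj_card_bij cubic_comb_inj _.
by rewrite card_cubic_ext !card_prod !expnS expn0 muln1 mulnA.
Qed.

Lemma cubic_basis_span x :
  exists y, x = ecomb (in_alg F : {rmorphism K -> F}) cubic_basis y.
Proof. by have [g _ gK] := cubic_comb_bij; rewrite -[x]gK; eexists. Qed.

Lemma cubic_combD (a b c a' b' c' : K) :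
  cubic_comb (a + a', b + b', c + c') = cubic_comb (a, b, c) + cubic_comb (a', b', c').
Proof.
rewrite !cubic_combE -raddfD -big_split; congr in_qpoly.
by apply: eq_bigr => -[[|[|[|//]]] ?] _; apply: scalerDl.
Qed.

Lemma cubic_comb0 : cubic_comb (0, 0, 0) = 0.
Proof. by rewrite cubic_combE big1 ?raddf0 // => -[[|[|[|//]]] ?] _; rewrite scale0r. Qed.

Lemma cubic_comb_unit :
  [/\ cubic_comb (1, 0, 0) = cubic_basis ord0,
      cubic_comb (0, 1, 0) = cubic_basis (lift ord0 ord0)
    & cubic_comb (0, 0, 1) = cubic_basis ord_max].
Proof.
rewrite /cubic_basis /cubic_basis_poly !cubic_combE !cubic_comb_polyE /=.
by split; congr in_qpoly; rewrite -!mul_polyC ?polyCB ?polyCM ?polyC0 ?polyC1; ring.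
Qed.

Lemma cubic_basis_neq0 i : cubic_basis i != 0.
Proof.
have [e0 e1 e2] := cubic_comb_unit; rewrite -cubic_comb0.
case: (ord3_cases i) => ->; rewrite -?e0 -?e1 -?e2 (inj_eq cubic_comb_inj).
all: by rewrite !xpair_eqE oner_eq0 ?andbF.
Qed.

End CubicExtension.

Definition tripartite_mub (p : nat) : Prop :=
  exists M : 'I_(p ^ 3).+1 -> family3 p,
    (forall n, orthonormal_basis (M n)) /\
    (forall n m, n != m -> mutually_unbiased (M n) (M m)) /\
    exists S : {set 'I_(p ^ 3).+1},
      #|S| = p.+1 /\
      (forall n, n \in S -> forall a, fully_separable (M n a)) /\
      (forall n, n \notin S -> forall a, genuinely_tripartite_entangled (M n a)).

Section ProductStates.

Variables (p : nat) (psi : vec3 p).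

Lemma product_1_23_swap : product_1_23 psi -> forall i i' j k j' k',
  psi (i, j, k) * psi (i', j', k') = psi (i, j', k') * psi (i', j, k).
Proof. by case=> u [phi E] i i' j k j' k'; rewrite !E; ring. Qed.

Lemma product_2_13_swap : product_2_13 psi -> forall i i' j k j' k',
  psi (i, j, k) * psi (i', j', k') = psi (i', j, k') * psi (i, j', k).
Proof. by case=> v [phi E] i i' j k j' k'; rewrite !E; ring. Qed.

Lemma product_3_12_swap : product_3_12 psi -> forall i i' j k j' k',
  psi (i, j, k) * psi (i', j', k') = psi (i', j', k) * psi (i, j, k').
Proof. by case=> w [phi E] i i' j k j' k'; rewrite !E; ring. Qed.

End ProductStates.

Definition std_basis (p : nat) : family3 p := fun a x => (a == x)%:R.

Lemma hdot_std_basisl p a (v : vec3 p) : hdot (std_basis a) v = v a.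
Proof.
rewrite /hdot (bigD1 a) // big1 /= ?addr0 /std_basis ?eqxx ?conjC1 ?mul1r //.
by move=> x xa; rewrite eq_sym (negPf xa) conjC0 mul0r.
Qed.

Lemma hdot_std_basisr p a (v : vec3 p) : hdot v (std_basis a) = (v a)^*.
Proof.
rewrite /hdot (bigD1 a) // big1 /= ?addr0 /std_basis ?eqxx ?mulr1 //.
by move=> x xa; rewrite eq_sym (negPf xa) mulr0.
Qed.

Lemma std_basis_separable p (a : idx3 p) : fully_separable (std_basis a).
Proof.
exists (fun i => (a.1.1 == i)%:R), (fun j => (a.1.2 == j)%:R), (fun k => (a.2 == k)%:R).
by case: a => [[a1 a2] a3] i j k; rewrite /std_basis !xpair_eqE -!natrM !mulnb.
Qed.

Lemma tripartite_mub_adjoin_std p (Q : 'I_(p ^ 3) -> family3 p) (S : {set 'I_(p ^ 3)}) :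
  (forall m, orthonormal_basis (Q m)) ->
  (forall m m', m != m' -> mutually_unbiased (Q m) (Q m')) ->
  (forall m a x, `|Q m a x| ^+ 2 = ((p ^ 3)%N)%:R^-1) ->
  #|S| = p ->
  (forall m, m \in S -> forall a, fully_separable (Q m a)) ->
  (forall m, m \notin S -> forall a, genuinely_tripartite_entangled (Q m a)) ->
  tripartite_mub p.
Proof.
move=> Q_on Q_mu Q_flat cardS Q_sep Q_ent.
pose M n := if unlift ord0 n is Some m then Q m else @std_basis p.
have M0 : M ord0 = @std_basis p by rewrite /M unlift_none.
have Ml m : M (lift ord0 m) = Q m by rewrite /M liftK.
have std_Q m : mutually_unbiased (@std_basis p) (Q m).
  by move=> a b; rewrite hdot_std_basisl Q_flat.
exists M; split; [|split].
- move=> n; case: (unliftP ord0 n) => [m|] ->; rewrite ?Ml ?M0 //.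
  by move=> a b; rewrite hdot_std_basisl /std_basis eq_sym.
- move=> n n'; case: (unliftP ord0 n) => [m|] ->; case: (unliftP ord0 n') => [m'|] ->;
    rewrite ?Ml ?M0 ?eqxx // => nn'.
  + by apply: Q_mu; apply: contraNneq nn' => ->.
  + by move=> a b; rewrite hdot_std_basisr norm_conjC Q_flat.
- exists (ord0 |: [set lift ord0 m | m in S]); split; [|split].
  + rewrite cardsU1 card_imset; last exact: lift_inj.
    by rewrite cardS; case: imsetP => // -[m _ /esym/eqP]; rewrite lift_eqF.
  + move=> n; rewrite !inE => /orP[/eqP->|/imsetP[m mS ->]].
      by rewrite M0 => a; apply: std_basis_separable.
    by rewrite Ml; apply: Q_sep.
  + move=> n; rewrite !inE negb_or => /andP[]; case: (unliftP ord0 n) => [m|] -> //.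
    rewrite Ml => _ nS a; apply: Q_ent; apply: contraNN nS => mS.
    exact: imset_f.
Qed.

Section OddPrime.

Variables (p : nat) (w : Cplx).
Hypotheses (p_prime : prime p) (p_neq2 : p != 2%N) (w_prim : p.-primitive_root w).

Local Notation K := 'F_p.

Definition root_char (k : K) : Cplx := w ^+ k.

Lemma root_charD : {morph root_char : x y / x + y >-> x * y}.
Proof.
move=> x y; rewrite /root_char -exprD -[RHS](prim_expr_mod w_prim) /=.
by move: (x + y)%N => n; rewrite (Fp_cast p_prime).
Qed.

Lemma root_char_norm k : `|root_char k| = 1.
Proof.
have p_gt0 := prime_gt0 p_prime.
have : `|w| ^+ p == 1 by rewrite -normrX prim_expr_order // normr1.
by rewrite pexpr_eq1 // => /eqP w1; rewrite /root_char normrX w1 expr1n.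
Qed.

Lemma root_char_eq1 k : root_char k = 1 -> k = 0.
Proof.
move/eqP; rewrite /root_char -(prim_order_dvd w_prim) => p_dvd.
have k_lt : (k < p)%N by rewrite -[X in (_ < X)%N](Fp_cast p_prime) ltn_ord.
apply/val_inj/eqP; rewrite /= -leqn0 leqNgt; apply/negP => k_gt0.
by move: (dvdn_leq k_gt0 p_dvd); rewrite leqNgt k_lt.
Qed.

Lemma Fp_two_neq0 : 2%:R != 0 :> K.
Proof.
apply/eqP => /(congr1 (fun k : K => nat_of_ord k)); rewrite val_Fp_nat // modn_small //.
by rewrite ltn_neqAle eq_sym p_neq2 prime_gt1.
Qed.

Lemma nat_Fp_inj : injective (fun i : 'I_p => (i : nat)%:R : K).
Proof.
move=> i j /(congr1 (fun k : K => nat_of_ord k)).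
by rewrite !val_Fp_nat // !modn_small // => /val_inj.
Qed.

Variables (q : {poly K}) (size_q : (size q <= 3)%N).
Hypothesis q_rootfree : forall r, ~~ root ('X^3 + q) r.

Local Notation F := {poly %/ 'X^3 + q with cubic_monic_irreducible size_q q_rootfree}.
Local Notation T := (@qtrace _ q size_q q_rootfree).
Local Notation e := (cubic_basis size_q q_rootfree).
Local Notation comb := (cubic_comb size_q q_rootfree).
Local Notation psi := (trace_char T root_char).

Lemma card_odd_ext : #|F| = (p ^ 3)%N.
Proof. by rewrite card_cubic_ext card_Fp. Qed.

Definition idx_coord (x : idx3 p) : F :=
  comb ((x.1.1 : nat)%:R, (x.1.2 : nat)%:R, (x.2 : nat)%:R).

Lemma idx_coord_bij : bijective idx_coord.
Proof.
apply: inj_card_bij => [[[i j] k] [[i' j'] k'] /cubic_comb_inj|].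
  by case=> /nat_Fp_inj-> /nat_Fp_inj-> /nat_Fp_inj->.
by rewrite card_odd_ext !card_prod card_ord !expnS expn0 muln1 mulnA.
Qed.

Lemma hdot_idx_coord (u v : F -> Cplx) :
  hdot (u \o idx_coord) (v \o idx_coord) = dotF u v.
Proof. by rewrite /hdot /dotF (reindex idx_coord) //; apply: onW_bij idx_coord_bij. Qed.

Definition F_of_ord (m : 'I_(p ^ 3)) : F :=
  enum_val (cast_ord (esym card_odd_ext) m).
Definition ord_of_F (a : F) : 'I_(p ^ 3) := cast_ord card_odd_ext (enum_rank a).

Lemma ord_of_FK : cancel ord_of_F F_of_ord.
Proof. by move=> a; rewrite /F_of_ord /ord_of_F cast_ordK enum_rankK. Qed.

Lemma F_of_ordK : cancel F_of_ord ord_of_F.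
Proof. by move=> m; rewrite /F_of_ord /ord_of_F enum_valK cast_ordKV. Qed.

Definition odd_family (m : 'I_(p ^ 3)) : family3 p :=
  fun a x => quad_vec psi (F_of_ord m) (idx_coord a) (idx_coord x).

Lemma trace_root_charD : {morph psi : x y / x + y >-> x * y}.
Proof. exact: (trace_charD _ root_charD). Qed.

Lemma trace_root_char_norm x : `|psi x| = 1.
Proof. exact: (trace_char_norm _ root_char_norm). Qed.

Lemma trace_root_char_nontrivial : exists t, psi t != 1.
Proof. by apply: trace_char_nontrivial root_char_eq1; rewrite /= qtrace1 oner_eq0. Qed.

Lemma odd_family_orthonormal m : orthonormal_basis (odd_family m).
Proof.
move=> a b; rewrite (hdot_idx_coord (quad_vec psi _ _) (quad_vec psi _ _)).
rewrite quad_vec_orthonormal ?(bij_eq idx_coord_bij) //.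
- exact: trace_root_charD.
- exact: trace_root_char_norm.
- exact: trace_root_char_nontrivial.
Qed.

Lemma odd_family_unbiased m m' :
  m != m' -> mutually_unbiased (odd_family m) (odd_family m').
Proof.
move=> mm' a b; rewrite (hdot_idx_coord (quad_vec psi _ _) (quad_vec psi _ _)).
rewrite quad_vec_unbiased ?card_odd_ext //.
- exact: trace_root_charD.
- exact: trace_root_char_norm.
- exact: trace_root_char_nontrivial.
- by rewrite -(rmorph_nat (in_alg F)) fmorph_eq0 Fp_two_neq0.
- by apply: contra mm' => /eqP/(can_inj F_of_ordK)->.
Qed.

Lemma odd_family_flat m a x : `|odd_family m a x| ^+ 2 = ((p ^ 3)%N)%:R^-1.
Proof.
by rewrite /odd_family quad_vec_flat ?card_odd_ext //; exact: trace_root_char_norm.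
Qed.

Lemma odd_family_separable k a :
  fully_separable (odd_family (ord_of_F k%:A) a).
Proof.
pose g (l : 'I_3) (t : K) :=
  root_char (k * t ^+ 2 * T (e l * e l) + t * T (idx_coord a * e l)).
exists (fun i => isqrt #|F| * g ord0 (i : nat)%:R),
  (fun j => g (lift ord0 ord0) (j : nat)%:R),
  (fun l => g (lift ord0 (lift ord0 ord0)) (l : nat)%:R) => i j l.
rewrite /odd_family ord_of_FK /idx_coord /cubic_comb.
rewrite (@quad_vec_separable _ _ (in_alg F : {rmorphism K -> F}) T
  (@qtrace_algM _ q size_q q_rootfree) _ e (@cubic_basis_orth _ q size_q q_rootfree)
  _ root_charD root_char_norm).
by rewrite !big_ord_recl big_ord0 mulr1 [LHS]mulrA [LHS]mulrA.
Qed.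

Local Notation i0 := (Ordinal (prime_gt0 p_prime)).
Local Notation i1 := (Ordinal (prime_gt1 p_prime)).

Lemma idx_coord_unit : [/\ idx_coord (i1, i0, i0) = e ord0,
  idx_coord (i0, i1, i0) = e (lift ord0 ord0) & idx_coord (i0, i0, i1) = e ord_max].
Proof.
by have [<- <- <-] := cubic_comb_unit size_q q_rootfree; rewrite /idx_coord /= mulr1n.
Qed.

Lemma idx_coord_add :
  [/\ idx_coord (i1, i1, i0) = idx_coord (i1, i0, i0) + idx_coord (i0, i1, i0),
      idx_coord (i1, i0, i1) = idx_coord (i1, i0, i0) + idx_coord (i0, i0, i1)
    & idx_coord (i0, i1, i1) = idx_coord (i0, i1, i0) + idx_coord (i0, i0, i1)].
Proof.
have combD (x y : K * K * K) :
    comb (x.1.1 + y.1.1, x.1.2 + y.1.2, x.2 + y.2) = comb x + comb y.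
  by case: x y => [[? ?] ?] [[? ?] ?]; apply: cubic_combD.
by split; rewrite /idx_coord -combD /= !addr0 add0r.
Qed.

Lemma odd_family_rank_orth m a x z y : idx_coord y = idx_coord x + idx_coord z ->
  odd_family m a y * odd_family m a (i0, i0, i0) = odd_family m a x * odd_family m a z ->
  T (F_of_ord m * idx_coord x * idx_coord z) = 0.
Proof.
move=> yE; rewrite /odd_family yE [idx_coord (i0, i0, i0)]cubic_comb0.
exact: quad_vec_rank_orth root_charD root_char_norm root_char_eq1 Fp_two_neq0 _ _ _ _.
Qed.

Lemma odd_scalar_of_orth a i :
  (forall j, j != i -> T (a * e i * e j) = 0) -> exists k, a = k%:A.
Proof.
move=> /(@scalar_of_orth _ _ (in_alg F : {rmorphism K -> F}) T
  (@qtrace_algM _ q size_q q_rootfree)) [].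
- by rewrite /= qtrace1 oner_eq0.
- exact: cubic_basis_span.
- exact: cubic_basis_neq0.
- exact: cubic_basis_orth.
- by move=> k ->; exists k.
Qed.

Lemma odd_family_entangled m a : (forall k, F_of_ord m != k%:A) ->
  genuinely_tripartite_entangled (odd_family m a).
Proof.
move=> nonscalar; have [e0E e1E e2E] := idx_coord_unit.
have [s110 s101 s011] := idx_coord_add; have orth := @odd_family_rank_orth m a.
have scalar i : (forall j, j != i -> T (F_of_ord m * e i * e j) = 0) -> False.
  by case/odd_scalar_of_orth=> k Ak; case/eqP: (nonscalar k).
split; [|split].
- move/product_1_23_swap => H; apply: (scalar ord0) => j.
  case: (ord3_cases j) => -> ji; rewrite ?eqxx // in ji.
  + by have := orth _ _ _ s110 (H i1 i0 i1 i0 i0 i0); rewrite e0E e1E.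
  + by have := orth _ _ _ s101 (H i1 i0 i0 i1 i0 i0); rewrite e0E e2E.
- move/product_2_13_swap => H; apply: (scalar (lift ord0 ord0)) => j.
  case: (ord3_cases j) => -> ji; rewrite ?eqxx // in ji.
  + by have := orth _ _ _ (etrans s110 (addrC _ _)) (H i1 i0 i1 i0 i0 i0); rewrite e0E e1E.
  + by have := orth _ _ _ s011 (H i0 i0 i1 i1 i0 i0); rewrite e1E e2E.
- move/product_3_12_swap => H; apply: (scalar ord_max) => j.
  case: (ord3_cases j) => -> ji; rewrite ?eqxx // in ji.
  + by have := orth _ _ _ (etrans s101 (addrC _ _)) (H i1 i0 i0 i1 i0 i0); rewrite e0E e2E.
  + by have := orth _ _ _ (etrans s011 (addrC _ _)) (H i0 i0 i1 i1 i0 i0); rewrite e1E e2E.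
Qed.

Lemma tripartite_mub_odd : tripartite_mub p.
Proof.
apply: (@tripartite_mub_adjoin_std _ odd_family [set ord_of_F k%:A | k : K]).
- exact: odd_family_orthonormal.
- exact: odd_family_unbiased.
- exact: odd_family_flat.
- rewrite card_imset ?card_Fp // => k k' /(can_inj ord_of_FK).
  exact: (fmorph_inj (in_alg F)).
- by move=> _ /imsetP[k _ ->] a; apply: odd_family_separable.
- move=> m mS a; apply: odd_family_entangled => k; apply: contra mS => /eqP Emk.
  by apply/imsetP; exists k; rewrite // -Emk F_of_ordK.
Qed.

End OddPrime.

Lemma Ci_exp4 : ('i : Cplx) ^+ 4 = 1.
Proof. by rewrite (exprM _ 2 2) sqrCi sqrrN expr1n. Qed.

Lemma prim_root_Ci : 4.-primitive_root ('i : Cplx).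
Proof.
have [m pm] := prim_order_exists (isT : (0 < 4)%N) Ci_exp4.
have Ci2 : 'i ^+ 2 != 1 :> Cplx.
  by rewrite sqrCi -subr_eq0 -opprD oppr_eq0 -(natrD _ 1 1) pnatr_eq0.
case: m pm => [|[|[|[|[|m]]]]] pm //.
- by move=> _; case/eqP: Ci2; have := prim_expr_order pm; rewrite expr1 => ->; rewrite expr1n.
- by move=> _; case/eqP: Ci2; rewrite -(prim_expr_order pm).
Qed.

Definition count_mod4 (r : nat) (s : seq nat) := count (fun k => k %% 4 == r)%N s.

Lemma sum_Ci_exp s : \sum_(k <- s) ('i : Cplx) ^+ k =
  (count_mod4 0 s)%:R - (count_mod4 2 s)%:R
  + 'i * ((count_mod4 1 s)%:R - (count_mod4 3 s)%:R).
Proof.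
elim: s => [|k s IH]; first by rewrite big_nil /count_mod4 /= subrr mulr0 addr0.
rewrite big_cons IH /count_mod4 /= -(expr_mod _ Ci_exp4).
have : (k %% 4 < 4)%N by rewrite ltn_mod.
case: (k %% 4)%N => [|[|[|[|]]]] // _ /=; rewrite ?natrD.
- by rewrite expr0; ring.
- by rewrite expr1; ring.
- by rewrite sqrCi; ring.
- by rewrite exprS sqrCi; ring.
Qed.

Lemma Ci_exp_cancel (c : Cplx) a b a' b' : c != 0 ->
  c * 'i ^+ a * (c * 'i ^+ b) = c * 'i ^+ a' * (c * 'i ^+ b') ->
  ((a + b) %% 4 = (a' + b') %% 4)%N.
Proof.
move=> c0 E; apply/eqP; rewrite -(eq_prim_root_expr prim_root_Ci) !exprD.
by apply/eqP/(mulfI (mulf_neq0 c0 c0)); rewrite mulrACA E mulrACA.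
Qed.

Lemma conjCi_exp e : (('i : Cplx) ^+ e)^* = ('i ^+ 3) ^+ e.
Proof. by rewrite rmorphXn /= conjCi exprS sqrCi mulrN1. Qed.

(* Basis m consists of the vectors x |-> i^(Q_m(x) + 2 a.x), a in {0,1}^3, for the
   Z/4-valued quadratic forms Q_m(x) = d.x + 2 (o0 x0 x1 + o1 x0 x2 + o2 x1 x2);
   only forms 0 and 1 are free of cross terms. *)
Definition qubit_form (m : nat) : (nat * nat * nat) * (nat * nat * nat) :=
  match m with
  | 0 => ((0,0,0),(0,0,0))
  | 1 => ((1,1,1),(0,0,0))
  | 2 => ((0,0,1),(1,0,1))
  | 3 => ((0,1,0),(1,1,0))
  | 4 => ((0,1,1),(0,1,1))
  | 5 => ((1,0,0),(0,1,1))
  | 6 => ((1,0,1),(1,1,0))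
  | _ => ((1,1,0),(1,0,1))
  end%N.

Definition qubit_exp (m a0 a1 a2 x0 x1 x2 : nat) : nat :=
  let: ((d0, d1, d2), (o0, o1, o2)) := qubit_form m in
  (d0 * x0 + d1 * x1 + d2 * x2 + 2 * (o0 * x0 * x1 + o1 * x0 * x2 + o2 * x1 * x2)
   + 2 * (a0 * x0 + a1 * x1 + a2 * x2))%N.

Lemma sum_idx3 p (H : idx3 p -> Cplx) :
  \sum_(x : idx3 p) H x = \sum_(i < p) \sum_(j < p) \sum_(k < p) H (i, j, k).
Proof.
rewrite [RHS]pair_bigA /=.
have -> : \sum_(x : idx3 p) H x = \sum_(ij : 'I_p * 'I_p) \sum_(k < p) H (ij, k).
  by rewrite [RHS]pair_bigA; apply: eq_bigr => -[].
by apply: eq_bigr => -[].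
Qed.

Definition cube_seq (G : nat -> nat -> nat -> nat) : seq nat :=
  [:: G 0 0 0; G 0 0 1; G 0 1 0; G 0 1 1; G 1 0 0; G 1 0 1; G 1 1 0; G 1 1 1]%N.

Lemma sum_idx3_cube (F : nat -> Cplx) (G : nat -> nat -> nat -> nat) :
  \sum_(x : idx3 2) F (G x.1.1 x.1.2 x.2) = \sum_(k <- cube_seq G) F k.
Proof.
rewrite sum_idx3 !big_ord_recl !big_ord0 /= !big_cons big_nil /=.
by rewrite !addr0 !addrA.
Qed.

Definition all_cube (P : nat -> nat -> nat -> bool) :=
  all (fun i => all (fun j => all (fun k => P i j k) (iota 0 2)) (iota 0 2)) (iota 0 2).

Lemma all_cubeP P : all_cube P -> forall x : idx3 2, P x.1.1 x.1.2 x.2.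
Proof.
move=> H [[i j] k] /=.
have iota2 (y : 'I_2) : val y \in iota 0 2 by rewrite mem_iota /= ltn_ord.
by move/allP: H => /(_ _ (iota2 i)) /allP /(_ _ (iota2 j)) /allP /(_ _ (iota2 k)).
Qed.

(* Exponent of i in conj(i^(Q_m a x)) * i^(Q_m' b x), as conj(i) = i^3. *)
Definition dot_exp m a0 a1 a2 m' b0 b1 b2 :=
  fun i j k => (3 * qubit_exp m a0 a1 a2 i j k + qubit_exp m' b0 b1 b2 i j k)%N.

Definition check_orthonormal := all (fun m => all_cube (fun a0 a1 a2 =>
  all_cube (fun b0 b1 b2 =>
  let s := cube_seq (dot_exp m a0 a1 a2 m b0 b1 b2) in
  if (a0, a1, a2) == (b0, b1, b2) then
    [&& count_mod4 0 s == 8, count_mod4 1 s == 0, count_mod4 2 s == 0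
      & count_mod4 3 s == 0]%N
  else (count_mod4 0 s == count_mod4 2 s) && (count_mod4 1 s == count_mod4 3 s))))
  (iota 0 8).

(* (a - b)^2 in nat: one of the two truncated differences is 0. *)
Definition sq_dist (a b : nat) := ((a - b) * (a - b) + (b - a) * (b - a))%N.

Definition check_unbiased := all (fun m => all (fun m' => (m != m') ==>
  all_cube (fun a0 a1 a2 => all_cube (fun b0 b1 b2 =>
  let s := cube_seq (dot_exp m a0 a1 a2 m' b0 b1 b2) in
  sq_dist (count_mod4 0 s) (count_mod4 2 s)
  + sq_dist (count_mod4 1 s) (count_mod4 3 s) == 8)%N)) (iota 0 8)) (iota 0 8).

Lemma check_orthonormal_ok : check_orthonormal. Proof. by vm_compute. Qed.
Lemma check_unbiased_ok : check_unbiased. Proof. by vm_compute. Qed.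

Definition place (l c y0 y1 : nat) : nat * nat * nat :=
  match l with 1 => (c, y0, y1) | 2 => (y0, c, y1) | _ => (y0, y1, c) end%N.

Definition exp_at (E : nat -> nat -> nat -> nat) (t : nat * nat * nat) := E t.1.1 t.1.2 t.2.

Definition swap_defect (E : nat -> nat -> nat -> nat) l :=
  has (fun y0 => has (fun y1 => has (fun z0 => has (fun z1 =>
    ((exp_at E (place l 0 y0 y1) + exp_at E (place l 1 z0 z1)) %% 4 !=
     (exp_at E (place l 0 z0 z1) + exp_at E (place l 1 y0 y1)) %% 4)%N)
    (iota 0 2)) (iota 0 2)) (iota 0 2)) (iota 0 2).

Lemma entangled_of_swap_defect (psi : vec3 2) (c : Cplx) (E : nat -> nat -> nat -> nat) :
  c != 0 ->
  (forall i j k : 'I_2, psi (i, j, k) = c * 'i ^+ E i j k) ->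
  [&& swap_defect E 1, swap_defect E 2 & swap_defect E 3] ->
  genuinely_tripartite_entangled psi.
Proof.
move=> c0 psiE /and3P[d1 d2 d3].
have iota2 y : y \in iota 0 2 -> nat_of_ord (inord y : 'I_2) = y.
  by rewrite mem_iota => /andP[_ ?]; apply: inordK.
split; [|split].
- move/product_1_23_swap => H.
  case/hasP: d1 => y0 /iota2 h0 /hasP[y1 /iota2 h1 /hasP[z0 /iota2 g0 /hasP[z1 /iota2 g1 /negP]]].
  apply; apply/eqP.
  have := H (inord 0) (inord 1) (inord y0) (inord y1) (inord z0) (inord z1).
  by rewrite !psiE h0 h1 g0 g1 !inordK //; apply: Ci_exp_cancel.
- move/product_2_13_swap => H.
  case/hasP: d2 => y0 /iota2 h0 /hasP[y1 /iota2 h1 /hasP[z0 /iota2 g0 /hasP[z1 /iota2 g1 /negP]]].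
  apply; apply/eqP.
  have := H (inord y0) (inord z0) (inord 0) (inord y1) (inord 1) (inord z1).
  by rewrite !psiE h0 h1 g0 g1 !inordK //; apply: Ci_exp_cancel.
- move/product_3_12_swap => H.
  case/hasP: d3 => y0 /iota2 h0 /hasP[y1 /iota2 h1 /hasP[z0 /iota2 g0 /hasP[z1 /iota2 g1 /negP]]].
  apply; apply/eqP.
  have := H (inord y0) (inord z0) (inord y1) (inord 0) (inord z1) (inord 1).
  by rewrite !psiE h0 h1 g0 g1 !inordK //; apply: Ci_exp_cancel.
Qed.

Definition check_entangled := all (fun m => all_cube (fun a0 a1 a2 =>
  [&& swap_defect (qubit_exp m a0 a1 a2) 1, swap_defect (qubit_exp m a0 a1 a2) 2
    & swap_defect (qubit_exp m a0 a1 a2) 3])) (iota 2 6).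

Lemma check_entangled_ok : check_entangled. Proof. by vm_compute. Qed.

Definition qubit_family (m : 'I_(2 ^ 3)) : family3 2 := fun a x =>
  isqrt 8 * 'i ^+ qubit_exp m a.1.1 a.1.2 a.2 x.1.1 x.1.2 x.2.

Lemma hdot_qubit_family m m' (a b : idx3 2) :
  hdot (qubit_family m a) (qubit_family m' b) = isqrt 8 * isqrt 8 *
   \sum_(k <- cube_seq (dot_exp m a.1.1 a.1.2 a.2 m' b.1.1 b.1.2 b.2)) 'i ^+ k.
Proof.
rewrite /hdot -sum_idx3_cube mulr_sumr; apply: eq_bigr => x _.
rewrite /qubit_family /dot_exp rmorphM /= conj_isqrt conjCi_exp -exprM exprD; ring.
Qed.

Lemma eq_idx3_2 (a b : idx3 2) :
  (a == b) = ((val a.1.1, val a.1.2, val a.2) == (val b.1.1, val b.1.2, val b.2)).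
Proof. by case: a b => [[a1 a2] a3] [[b1 b2] b3]; rewrite !xpair_eqE. Qed.

Lemma ord8_in_iota (m : 'I_(2 ^ 3)) : val m \in iota 0 8.
Proof. by rewrite mem_iota /= ltn_ord. Qed.

Lemma qubit_family_orthonormal m : orthonormal_basis (qubit_family m).
Proof.
move=> a b; rewrite hdot_qubit_family sum_Ci_exp eq_idx3_2.
move/allP: check_orthonormal_ok => /(_ _ (ord8_in_iota m)) /all_cubeP /(_ a) /all_cubeP /(_ b) /=.
case: ifP => _.
  case/and4P => /eqP-> /eqP-> /eqP-> /eqP->.
  by rewrite isqrtM subr0 subrr mulr0 addr0 mulVf // pnatr_eq0.
by case/andP => /eqP-> /eqP->; rewrite !subrr mulr0 addr0 mulr0.
Qed.

Lemma sqr_natB (a b : nat) : (a%:R - b%:R : Cplx) ^+ 2 = (sq_dist a b)%:R.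
Proof.
rewrite /sq_dist; case: (leqP a b) => h.
  have -> : (a - b = 0)%N by apply/eqP; rewrite subn_eq0.
  by rewrite mul0n add0n natrM natrB // -opprB sqrrN expr2.
have -> : (b - a = 0)%N by apply/eqP; rewrite subn_eq0 ltnW.
by rewrite mul0n addn0 natrM natrB ?(ltnW h) // expr2.
Qed.

Lemma sqr_norm_gauss_int (x y z w : nat) :
  `|(x%:R - z%:R) + 'i * (y%:R - w%:R) : Cplx| ^+ 2 = (sq_dist x z + sq_dist y w)%:R.
Proof.
have r1 : (x%:R - z%:R : Cplx) \is Num.real by rewrite rpredB ?realn.
have r2 : (y%:R - w%:R : Cplx) \is Num.real by rewrite rpredB ?realn.
by rewrite normC2_Re_Im (Re_rect r1 r2) (Im_rect r1 r2) natrD !sqr_natB.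
Qed.

Lemma qubit_family_unbiased m m' :
  m != m' -> mutually_unbiased (qubit_family m) (qubit_family m').
Proof.
move=> mm' a b; rewrite hdot_qubit_family sum_Ci_exp normrM exprMn sqr_norm_gauss_int.
move/allP: check_unbiased_ok => /(_ _ (ord8_in_iota m)) /allP /(_ _ (ord8_in_iota m')).
rewrite (inj_eq val_inj) mm' implyTb => /all_cubeP /(_ a) /all_cubeP /(_ b) /eqP ->.
by rewrite normrM exprMn !sqr_norm_isqrt; field.
Qed.

Lemma qubit_family_flat m a x : `|qubit_family m a x| ^+ 2 = ((2 ^ 3)%N)%:R^-1.
Proof. by rewrite normrM normrX normCi expr1n mulr1 sqr_norm_isqrt. Qed.

Lemma qubit_family_separable (m : 'I_(2 ^ 3)) a : (m < 2)%N ->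
  fully_separable (qubit_family m a).
Proof.
move=> m_lt2; pose E := qubit_exp m a.1.1 a.1.2 a.2.
have E_split i j k : E i j k = (E i 0 0 + E 0 j 0 + E 0 0 k)%N.
  by rewrite /E; case: (val m) m_lt2 => [|[|]] // _; rewrite /qubit_exp /=; ring.
exists (fun i : 'I_2 => isqrt 8 * 'i ^+ E i 0 0), (fun j : 'I_2 => 'i ^+ E 0 j 0),
  (fun k : 'I_2 => 'i ^+ E 0 0 k).
by move=> i j k; rewrite /qubit_family -/E E_split !exprD !mulrA.
Qed.

Lemma qubit_family_entangled (m : 'I_(2 ^ 3)) a : ~~ (m < 2)%N ->
  genuinely_tripartite_entangled (qubit_family m a).
Proof.
move=> m_ge2; apply: (@entangled_of_swap_defect _ (isqrt 8) (qubit_exp m a.1.1 a.1.2 a.2)).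
- by rewrite invr_eq0 sqrtC_eq0 pnatr_eq0.
- by [].
have : val m \in iota 2 6 by rewrite mem_iota leqNgt m_ge2; exact: ltn_ord m.
by move/allP: check_entangled_ok => H /H /all_cubeP; apply.
Qed.

Lemma tripartite_mub_2 : tripartite_mub 2.
Proof.
pose S := [set widen_ord (isT : (2 <= 2 ^ 3)%N) i | i : 'I_2].
have memS m : (m \in S) = (m < 2)%N.
  apply/imsetP/idP => [[i _ ->]|m_lt2]; first by rewrite /= ltn_ord.
  by exists (Ordinal m_lt2) => //; apply: val_inj.
apply: (@tripartite_mub_adjoin_std 2 qubit_family S).
- exact: qubit_family_orthonormal.
- exact: qubit_family_unbiased.
- exact: qubit_family_flat.
- by rewrite card_imset ?card_ord // => i j /(congr1 val) /= /val_inj.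
- by move=> m; rewrite memS => m_lt2 a; apply: qubit_family_separable.
- by move=> m; rewrite memS => m_ge2 a; apply: qubit_family_entangled.
Qed.

Lemma prim_root_exists (C : numClosedFieldType) n :
  (0 < n)%N -> exists z : C, n.-primitive_root z.
Proof.
pose P : {poly C} := 'X^n - 1; have [r Pr] := closed_field_poly_normal P.
move=> n_gt0; rewrite (monicP _) ?monicXnsubC // scale1r in Pr.
have r_roots : all n.-unity_root r by apply/allP=> z; rewrite -root_prod_XsubC -Pr.
have size_r : (n < (size r).+1)%N by rewrite -(size_prod_XsubC r id) -Pr size_XnsubC.
have [|z] := hasP (has_prim_root n_gt0 r_roots _ size_r); last by exists z.
by rewrite -separable_prod_XsubC -Pr separable_Xn_sub_1 // pnatr_eq0 -lt0n.
Qed.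

Theorem mainTheorem5 (p : nat) (hp : prime p) :
  exists M : 'I_(p ^ 3).+1 -> family3 p,
    (forall n, orthonormal_basis (M n)) /\
    (forall n m, n != m -> mutually_unbiased (M n) (M m)) /\
    exists S : {set 'I_(p ^ 3).+1},
      #|S| = p.+1 /\
      (forall n, n \in S -> forall a, fully_separable (M n a)) /\
      (forall n, n \notin S -> forall a, genuinely_tripartite_entangled (M n a)).
Proof.
have [->|p_neq2] := eqVneq p 2%N; first exact: tripartite_mub_2.
have [w w_prim] := prim_root_exists Cplx (prime_gt0 hp).
have [q [size_q q_rootfree]] := exists_rootfree_cubic 'F_p.
exact: (tripartite_mub_odd hp p_neq2 w_prim size_q q_rootfree).
Qed.
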